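(* Let $M$ be a graded $R$-module. The set $\beta=\{GX_r^{qp.M}\mid r\in h(R)\}$ forms a base for the quasi-Zariski topology on $qp.Spec_g(M)$.
   Context: $R=\bigoplus_{g\in G}R_g$ is a graded commutative ring with identity graded by a group $G$, $h(R)=\bigcup_g R_g$; $M$ is a graded $R$-module, $h(M)$ its homogeneous elements. $Gr(I)$ is the graded radical of a graded ideal $I$. $(K:_RM)=\{r: rM\subseteq K\}$. Graded prime submodule: proper graded $P$ with $rm\in P$ ($r\in h(R), m\in h(M)$) implying $m\in P$ or $r\in(P:_RM)$. $Gr_M(K)$: intersection of graded prime submodules containing $K$ ($M$ if none). Graded primeful property of $K$: for each graded prime $p\supseteq(K:_RM)$ there is a graded prime submodule $P\supseteq K$ with $(P:_RM)=p$. Graded quasi-primary submodule: proper graded $Q$ with $rm\in Q$ ($r\in h(R),m\in h(M)$) implying $r\in Gr((Q:_RM))$ or $m\in Gr_M(Q)$. $qp.Spec_g(M)$: graded quasi-primary submodules with the graded primeful property. $qp\text{-}V_M^g(K)=\{Q\in qp.Spec_g(M): Gr((Q:_RM))\supseteq Gr((K:_RM))\}$; the quasi-Zariski topology has closed sets exactly these. For $r\in h(R)$, $GX_r^{qp.M}=qp.Spec_g(M)\setminus qp\text{-}V_M^g(rM)$. *)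

From mathcomp Require Import all_boot all_order all_algebra.
Set Implicit Arguments. Unset Strict Implicit. Unset Printing Implicit Defensive.
Import GRing.Theory.
Local Open Scope ring_scope.

Definition is_group (G : Type) (mul : G -> G -> G) (e : G) (inv : G -> G) : Prop :=
  (forall a b c, mul a (mul b c) = mul (mul a b) c) /\
  (forall a, mul e a = a /\ mul a e = a) /\
  (forall a, mul (inv a) a = e /\ mul a (inv a) = e).

Definition additive_subgroup (V : zmodType) (S : V -> Prop) : Prop :=
  S 0 /\ forall x y, S x -> S y -> S (x - y).

(** V = (+)_{g in G} S g as an internal direct sum of additive subgroups. *)
Definition dsum_decomp (G : Type) (V : zmodType) (S : G -> V -> Prop) : Prop :=
  (forall g, additive_subgroup (S g)) /\
  (forall x : V, exists n (gs : 'I_n -> G) (f : 'I_n -> V),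
      (forall i j, gs i = gs j -> i = j) /\
      (forall i, S (gs i) (f i)) /\ x = \sum_(i < n) f i) /\
  (forall n (gs : 'I_n -> G) (f : 'I_n -> V),
      (forall i j, gs i = gs j -> i = j) ->
      (forall i, S (gs i) (f i)) -> \sum_(i < n) f i = 0 -> forall i, f i = 0).

Definition graded_ring (G : Type) (mul : G -> G -> G) (R : comPzRingType)
  (RG : G -> R -> Prop) : Prop :=
  dsum_decomp RG /\
  forall g h a b, RG g a -> RG h b -> RG (mul g h) (a * b).

Definition graded_module (G : Type) (mul : G -> G -> G) (R : comPzRingType)
  (RG : G -> R -> Prop) (M : lmodType R) (MG : G -> M -> Prop) : Prop :=
  dsum_decomp MG /\
  forall g h r m, RG g r -> MG h m -> MG (mul g h) (r *: m).

Definition homog (G T : Type) (S : G -> T -> Prop) (x : T) : Prop := exists g, S g x.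

Definition ideal (R : comPzRingType) (I : R -> Prop) : Prop :=
  I 0 /\ (forall x y, I x -> I y -> I (x + y)) /\ (forall r x, I x -> I (r * x)).

Definition submodule (R : comPzRingType) (M : lmodType R) (N : M -> Prop) : Prop :=
  N 0 /\ (forall x y, N x -> N y -> N (x + y)) /\ (forall r x, N x -> N (r *: x)).

Definition graded_ideal (G : Type) (R : comPzRingType) (RG : G -> R -> Prop)
  (I : R -> Prop) : Prop :=
  ideal I /\
  forall x, I x -> exists n (gs : 'I_n -> G) (f : 'I_n -> R),
    (forall i j, gs i = gs j -> i = j) /\
    (forall i, RG (gs i) (f i) /\ I (f i)) /\ x = \sum_(i < n) f i.

Definition graded_submodule (G : Type) (R : comPzRingType) (M : lmodType R)
  (MG : G -> M -> Prop) (N : M -> Prop) : Prop :=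
  submodule N /\
  forall x, N x -> exists n (gs : 'I_n -> G) (f : 'I_n -> M),
    (forall i j, gs i = gs j -> i = j) /\
    (forall i, MG (gs i) (f i) /\ N (f i)) /\ x = \sum_(i < n) f i.

Definition graded_prime_ideal (G : Type) (R : comPzRingType) (RG : G -> R -> Prop)
  (p : R -> Prop) : Prop :=
  graded_ideal RG p /\ (exists r, ~ p r) /\
  forall a b, homog RG a -> homog RG b -> p (a * b) -> p a \/ p b.

Definition Gr (G : Type) (R : comPzRingType) (RG : G -> R -> Prop)
  (I : R -> Prop) : R -> Prop :=
  fun x => exists n (gs : 'I_n -> G) (f : 'I_n -> R),
    (forall i j, gs i = gs j -> i = j) /\
    (forall i, RG (gs i) (f i)) /\ x = \sum_(i < n) f i /\
    (forall i, exists k, I (f i ^+ k.+1)).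

Definition colon (R : comPzRingType) (M : lmodType R) (K : M -> Prop) : R -> Prop :=
  fun r => forall m : M, K (r *: m).

Definition graded_prime_submodule (G : Type) (R : comPzRingType) (RG : G -> R -> Prop)
  (M : lmodType R) (MG : G -> M -> Prop) (P : M -> Prop) : Prop :=
  graded_submodule MG P /\ (exists m, ~ P m) /\
  forall r m, homog RG r -> homog MG m -> P (r *: m) -> P m \/ colon P r.

(** Gr_M(K): intersection of graded prime submodules containing K (M if none) *)
Definition GrM (G : Type) (R : comPzRingType) (RG : G -> R -> Prop)
  (M : lmodType R) (MG : G -> M -> Prop) (K : M -> Prop) : M -> Prop :=
  fun m => forall P, graded_prime_submodule RG MG P -> (forall x, K x -> P x) -> P m.

Definition graded_primeful (G : Type) (R : comPzRingType) (RG : G -> R -> Prop)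
  (M : lmodType R) (MG : G -> M -> Prop) (K : M -> Prop) : Prop :=
  forall p, graded_prime_ideal RG p -> (forall r, colon K r -> p r) ->
    exists P, graded_prime_submodule RG MG P /\ (forall x, K x -> P x) /\
              (forall r, colon P r <-> p r).

Definition graded_quasi_primary (G : Type) (R : comPzRingType) (RG : G -> R -> Prop)
  (M : lmodType R) (MG : G -> M -> Prop) (Q : M -> Prop) : Prop :=
  graded_submodule MG Q /\ (exists m, ~ Q m) /\
  forall r m, homog RG r -> homog MG m -> Q (r *: m) ->
    Gr RG (colon Q) r \/ GrM RG MG Q m.

Definition qpSpec (G : Type) (R : comPzRingType) (RG : G -> R -> Prop)
  (M : lmodType R) (MG : G -> M -> Prop) (Q : M -> Prop) : Prop :=
  graded_quasi_primary RG MG Q /\ graded_primeful RG MG Q.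

Definition qpV (G : Type) (R : comPzRingType) (RG : G -> R -> Prop)
  (M : lmodType R) (MG : G -> M -> Prop) (K : M -> Prop) (Q : M -> Prop) : Prop :=
  qpSpec RG MG Q /\ (forall r, Gr RG (colon K) r -> Gr RG (colon Q) r).

Definition smul_sub (R : comPzRingType) (M : lmodType R) (r : R) : M -> Prop :=
  fun x => exists m, x = r *: m.

Definition GX (G : Type) (R : comPzRingType) (RG : G -> R -> Prop)
  (M : lmodType R) (MG : G -> M -> Prop) (r : R) (Q : M -> Prop) : Prop :=
  qpSpec RG MG Q /\ ~ qpV RG MG (@smul_sub R M r) Q.

Definition qZ_open (G : Type) (R : comPzRingType) (RG : G -> R -> Prop)
  (M : lmodType R) (MG : G -> M -> Prop) (U : (M -> Prop) -> Prop) : Prop :=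
  exists K, graded_submodule MG K /\
    forall Q, U Q <-> (qpSpec RG MG Q /\ ~ qpV RG MG K Q).

Definition is_base (X I : Type) (open : (X -> Prop) -> Prop)
  (idx : I -> Prop) (B : I -> X -> Prop) : Prop :=
  (forall i, idx i -> open (B i)) /\
  forall U, open U -> forall x, U x ->
    exists i, idx i /\ B i x /\ forall y, B i y -> U y.

From mathcomp Require Import all_boot all_order all_algebra.
From Stdlib Require Import Classical.
Set Implicit Arguments. Unset Strict Implicit. Unset Printing Implicit Defensive.
Import GRing.Theory.
Local Open Scope ring_scope.

(* For homogeneous r the submodule rM is graded, so GX_r is open.  Conversely,
   if Q lies outside the closed set qp-V(K), some element of Gr((K:M)) is not
   in Gr((Q:M)), hence neither is one of its homogeneous components a, while a
   power s = a^n lies in (K:M).  Since a homogeneous element belongs to a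
   graded radical iff one of its powers lies in the ideal, a is in Gr((sM:M))
   but not in Gr((Q:M)), i.e. Q is in GX_s; and GX_s misses qp-V(K) because
   sM is contained in K. *)

Lemma group_mul_inj (G : Type) (mul : G -> G -> G) (e : G) (inv : G -> G) g :
  is_group mul e inv -> injective (mul g).
Proof.
move=> [mulA [mul1 mulV]] h h' eq_gh.
by rewrite -(mul1 h).1 -(mul1 h').1 -(mulV g).1 -!mulA eq_gh.
Qed.

Section DirectSum.

Variables (G : Type) (V : zmodType) (S : G -> V -> Prop).
Hypothesis hS : dsum_decomp S.

Lemma dsum_component0 g : S g 0.
Proof. exact: (hS.1 g).1. Qed.

Lemma dsum_componentN g x : S g x -> S g (- x).
Proof. by move=> Sx; rewrite -sub0r; apply: (hS.1 g).2 => //; apply: dsum_component0. Qed.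

Lemma dsum_componentB g x y : S g x -> S g y -> S g (x - y).
Proof. exact: (hS.1 g).2. Qed.

Variables (n : nat) (gs : 'I_n -> G) (f : 'I_n -> V).
Hypotheses (gs_inj : injective gs) (Sf : forall i, S (gs i) (f i)).

Lemma dsum_homog_component j a : S (gs j) a -> a = \sum_(i < n) f i -> a = f j.
Proof.
move=> Sa def_a.
pose f' i := f i - (if i == j then a else 0).
have Sf' i : S (gs i) (f' i).
  rewrite /f'; case: eqP => [-> | _]; last by rewrite subr0.
  exact: dsum_componentB.
have sum_f' : \sum_(i < n) f' i = 0.
  by rewrite sumrB -big_mkcond /= big_pred1_eq -def_a subrr.
have /eqP := hS.2.2 n gs f' gs_inj Sf' sum_f' j.
by rewrite /f' eqxx subr_eq0 => /eqP.
Qed.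

(* Prepend a, in the fresh degree g, to the family -f: it sums to 0, so a = 0. *)
Lemma dsum_homog_missing g a :
  (forall j, gs j <> g) -> S g a -> a = \sum_(i < n) f i -> a = 0.
Proof.
move=> g_new Sa def_a.
pose gs' j := if unlift ord0 j is Some j' then gs j' else g.
pose f' j := if unlift ord0 j is Some j' then - f j' else a.
have gs'_inj : injective gs'.
  move=> i j; rewrite /gs'.
  case: (unliftP ord0 i) => [i'|] ->; case: (unliftP ord0 j) => [j'|] -> //.
  - by move=> /gs_inj ->.
  - by move=> /g_new.
  - by move=> /esym /g_new.
have Sf' j : S (gs' j) (f' j).
  by rewrite /gs' /f'; case: (unlift ord0 j) => [j'|] //; apply: dsum_componentN.
have sum_f' : \sum_(j < n.+1) f' j = 0.
  rewrite big_ord_recl /f' unlift_none.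
  under eq_bigr => i _ do rewrite liftK.
  by rewrite sumrN -def_a subrr.
by have := hS.2.2 n.+1 gs' f' gs'_inj Sf' sum_f' ord0; rewrite /f' unlift_none.
Qed.

End DirectSum.

Section GradedRadical.

Variables (G : Type) (R : comPzRingType) (RG : G -> R -> Prop).

Lemma Gr_subset (I J : R -> Prop) x :
  (forall y, I y -> J y) -> Gr RG I x -> Gr RG J x.
Proof.
move=> IJ [n [gs [f [gs_inj [RGf [-> powI]]]]]].
exists n, gs, f; split=> //; split=> //; split=> // i.
by have [k Ik] := powI i; exists k; apply: IJ.
Qed.

Lemma Gr_homogP (I : R -> Prop) g a :
  dsum_decomp RG -> I 0 -> RG g a -> Gr RG I a <-> exists k, I (a ^+ k.+1).
Proof.
move=> hRG I0 RGa; split=> [[n [gs [f [gs_inj [RGf [def_a powI]]]]]] | [k Ik]].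
  have [[j gs_j] | g_new] := classic (exists j, gs j = g).
    have -> : a = f j by apply: (dsum_homog_component hRG gs_inj RGf); rewrite ?gs_j.
    exact: powI.
  rewrite (dsum_homog_missing hRG gs_inj RGf _ RGa def_a); last first.
    by move=> j gs_j; apply: g_new; exists j.
  by exists 0%N; rewrite expr1.
exists 1%N, (fun=> g), (fun=> a); split; first by move=> i j _; rewrite !ord1.
by split=> //; split=> [|_]; [rewrite big_ord1 | exists k].
Qed.

Lemma Gr_not_subset_homog (I J : R -> Prop) r :
  dsum_decomp RG -> J 0 -> Gr RG I r -> ~ Gr RG J r ->
  exists g a k, RG g a /\ I (a ^+ k.+1) /\ ~ Gr RG J a.
Proof.
move=> hRG J0 [n [gs [f [gs_inj [RGf [def_r powI]]]]]] notJr.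
have [i notJfi] : exists i, ~ exists k, J (f i ^+ k.+1).
  apply: NNPP => all_J; apply: notJr; exists n, gs, f; split=> //; split=> //; split=> // i.
  by apply: NNPP => notJfi; apply: all_J; exists i.
have [k Ik] := powI i.
exists (gs i), (f i), k; do 2!split=> //.
by rewrite (Gr_homogP hRG J0 (RGf i)).
Qed.

Lemma homog_exprS (mul : G -> G -> G) a k :
  graded_ring mul RG -> homog RG a -> homog RG (a ^+ k.+1).
Proof.
move=> hR [g RGa]; elim: k => [|k [g' IH]]; first by exists g; rewrite expr1.
by exists (mul g g'); rewrite exprS; apply: hR.2.
Qed.

End GradedRadical.

Section ScaledModule.

Variables (R : comPzRingType) (M : lmodType R).

Lemma colon0 (K : M -> Prop) : K 0 -> colon K 0.
Proof. by move=> K0 m; rewrite scale0r. Qed.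

Lemma colon_smul_sub_id (s : R) : colon (@smul_sub R M s) s.
Proof. by move=> m; exists m. Qed.

Lemma colon_smul_sub (K : M -> Prop) s t :
  colon K s -> colon (@smul_sub R M s) t -> colon K t.
Proof. by move=> Ks st m; have [m' ->] := st m. Qed.

Lemma smul_sub_submodule s : submodule (@smul_sub R M s).
Proof.
split; first by exists 0; rewrite scaler0.
split; first by move=> _ _ [m ->] [m' ->]; exists (m + m'); rewrite scalerDr.
by move=> t _ [m ->]; exists (t *: m); rewrite !scalerA mulrC.
Qed.

Lemma smul_sub_graded (G : Type) (mul : G -> G -> G) (e : G) (inv : G -> G)
    (RG : G -> R -> Prop) (MG : G -> M -> Prop) s :
  is_group mul e inv -> graded_module mul RG MG -> homog RG s ->
  graded_submodule MG (@smul_sub R M s).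
Proof.
move=> hG hM [g RGs]; split; first exact: smul_sub_submodule.
move=> _ [m ->]; have [n [gs [f [gs_inj [MGf ->]]]]] := hM.1.2.1 m.
exists n, (mul g \o gs), (fun i => s *: f i); split.
  by move=> i j /(group_mul_inj hG) /gs_inj.
split; last by rewrite scaler_sumr.
by move=> i; split; [apply: hM.2 | exists (f i)].
Qed.

End ScaledModule.

Section QuasiZariski.

Variables (G : Type) (R : comPzRingType) (RG : G -> R -> Prop).
Variables (M : lmodType R) (MG : G -> M -> Prop).

Lemma GX_open (mul : G -> G -> G) (e : G) (inv : G -> G) s :
  is_group mul e inv -> graded_module mul RG MG -> homog RG s ->
  qZ_open RG MG (GX RG MG s).
Proof.
move=> hG hM hs; exists (@smul_sub R M s).
by split=> //; apply: smul_sub_graded hG hM hs.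
Qed.

Lemma qpV_smul_sub (K Q : M -> Prop) s :
  colon K s -> qpV RG MG K Q -> qpV RG MG (@smul_sub R M s) Q.
Proof.
move=> Ks [qpQ VKQ]; split=> // t Gr_t; apply: VKQ.
by apply: Gr_subset Gr_t => u; apply: colon_smul_sub.
Qed.

Lemma GX_separates (mul : G -> G -> G) (K Q : M -> Prop) :
  graded_ring mul RG -> qpSpec RG MG Q -> ~ qpV RG MG K Q ->
  exists s, homog RG s /\ colon K s /\ GX RG MG s Q.
Proof.
move=> hR qpQ notVKQ.
have [r [Gr_Kr notGr_Qr]] : exists r, Gr RG (colon K) r /\ ~ Gr RG (colon Q) r.
  apply: NNPP => all_r; apply: notVKQ; split=> // r Gr_Kr.
  by apply: NNPP => notGr_Qr; apply: all_r; exists r.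
have Q0 : Q 0 by case: qpQ => [[[[]]]].
have [g [a [k [RGa [Ks notGr_Qa]]]]] :=
  Gr_not_subset_homog hR.1 (colon0 Q0) Gr_Kr notGr_Qr.
exists (a ^+ k.+1); split; first by apply: homog_exprS hR _; exists g.
split=> //; split=> // -[_ VsQ]; apply: notGr_Qa; apply: VsQ.
rewrite (Gr_homogP hR.1 (colon0 (smul_sub_submodule _ _).1) RGa).
by exists k; apply: colon_smul_sub_id.
Qed.

End QuasiZariski.

Theorem theorem3p14 (G : Type) (mul : G -> G -> G) (e : G) (inv : G -> G)
  (hG : is_group mul e inv)
  (R : comPzRingType) (RG : G -> R -> Prop) (hR : graded_ring mul RG)
  (M : lmodType R) (MG : G -> M -> Prop) (hM : graded_module mul RG MG) :
  is_base (qZ_open RG MG) (homog RG) (fun r : R => GX RG MG r).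
Proof.
split=> [s hs | U [K [_ defU]] Q /defU [qpQ notVKQ]]; first exact: GX_open hG hM hs.
have [s [hs [Ks GXsQ]]] := GX_separates hR qpQ notVKQ.
exists s; do 2!split=> //.
move=> Q' [qpQ' notVsQ']; apply/defU; split=> // VKQ'.
by apply: notVsQ'; apply: qpV_smul_sub Ks VKQ'.
Qed.
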